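(* For every integer $k\geq 2$ and every graph $G$ containing at most one cycle, $\nu_{k}(G) \geq \left \lfloor \frac{\nu_{k-1}(G) + \nu_{k+1}(G)}{2} \right \rfloor$.
   Context: Graphs are finite, without loops, possibly with multiple edges. For $k\geq 1$, $\nu_k(G)$ is the maximum number of edges of a $k$-edge-colorable subgraph of $G$. *)

(* A finite loopless multigraph is given by a finite vertex
   type V, a finite edge type E and two endpoint maps u v : E -> V with
   u e != v e for every edge e (parallel edges allowed). *)
From mathcomp Require Import all_boot.
Set Implicit Arguments. Unset Strict Implicit. Unset Printing Implicit Defensive.

Section MultiGraph.
Variables (V E : finType) (u v : E -> V).

Definition incident (e : E) (x : V) : bool := (u e == x) || (v e == x).

Definition share_end (e f : E) : bool := [exists x, incident e x && incident f x].

Definition k_colorable (k : nat) (F : {set E}) : bool :=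
  [exists c : {ffun E -> 'I_k},
    [forall e in F, forall f in F, ((e != f) && share_end e f) ==> (c e != c f)]].

Definition nu (k : nat) : nat := \max_(F : {set E} | k_colorable k F) #|F|.

Definition deg_in (C : {set E}) (x : V) : nat := #|[set e in C | incident e x]|.

(* C is (the edge set of) a cycle: nonempty, connected, 2-regular on its
   vertices.  Two parallel edges form a cycle of length 2. *)
Definition is_cycle (C : {set E}) : Prop :=
  [/\ C != set0,
      forall x : V, (deg_in C x == 0) || (deg_in C x == 2)
    & forall e f, e \in C -> f \in C ->
        connect [rel a b | [&& a \in C, b \in C & share_end a b]] e f].

Definition at_most_one_cycle : Prop :=
  forall C D : {set E}, is_cycle C -> is_cycle D -> C = D.

End MultiGraph.

(* Let F1 be a largest (k-1)-colourable and F2 a largest (k+1)-colourable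
   edge set, so that deg F1 + deg F2 <= 2k at every vertex.  If F1 :|: F2 is a
   forest, its edges, those of F1 :&: F2 counted twice, can be redistributed
   into two forests S, T whose degrees differ by at most one at every vertex,
   hence are at most k; a forest of maximum degree k is k-edge-colourable, so
   |F1| + |F2| = |S| + |T| <= 2 nu_k.  Otherwise delete an edge e0 of the unique
   cycle.  If e0 lies in at most one of F1, F2 this loses one edge.  If it lies
   in both (impossible for k = 2, where F1 is a matching), the degree bound
   drops to 2k - 2 at the ends of e0, so S and T can be k-coloured leaving a
   common colour free at both ends of e0, and e0 is added back to each. *)

From mathcomp Require Import all_boot zify.
From Stdlib Require Import Classical.
Set Implicit Arguments. Unset Strict Implicit. Unset Printing Implicit Defensive.

Section UnicyclicColoring.
Variables (V E : finType) (u v : E -> V).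
Implicit Types (A B C F S T : {set E}) (x y z w : V) (e f g : E).
Local Notation inc := (incident u v).
Local Notation deg := (deg_in u v).
Local Notation shr := (share_end u v).

Definition edges_at x : {set E} := [set e | inc e x].

Lemma deg_inE A x : deg A x = #|A :&: edges_at x|.
Proof. by apply: eq_card => e; rewrite !inE. Qed.

Lemma deg_set0 x : deg set0 x = 0.
Proof. by rewrite deg_inE set0I cards0. Qed.

Lemma incident_u e : inc e (u e). Proof. by rewrite /incident eqxx. Qed.
Lemma incident_v e : inc e (v e). Proof. by rewrite /incident eqxx orbT. Qed.

Lemma incidentP e x : inc e x -> x = u e \/ x = v e.
Proof. by case/orP=> /eqP <-; [left | right]. Qed.

Lemma incident_other e w : inc e w ->
  exists2 z, inc e z & forall x, inc e x -> x = w \/ x = z.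
Proof.
case/incidentP=> ->; [exists (v e) | exists (u e)];
  rewrite ?incident_u ?incident_v // => x /incidentP[]; tauto.
Qed.

Lemma share_endI e f x : inc e x -> inc f x -> shr e f.
Proof. by move=> ex fx; apply/existsP; exists x; rewrite ex fx. Qed.

Lemma share_endP e f : shr e f -> exists2 x, inc e x & inc f x.
Proof. by case/existsP=> x /andP[ex fx]; exists x. Qed.

Lemma share_endC e f : shr e f = shr f e.
Proof. by apply/idP/idP=> /share_endP[x ex fx]; apply: share_endI fx ex. Qed.

Lemma subset_leq_deg A B x : A \subset B -> deg A x <= deg B x.
Proof. by move=> sAB; rewrite !deg_inE subset_leq_card // setSI. Qed.

Lemma degD1 A g x : g \in A -> deg A x = inc g x + deg (A :\ g) x.
Proof.
move=> gA; rewrite !deg_inE (cardsD1 g) !inE gA /=; congr (_ + _).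
by apply: eq_card => e; rewrite !inE andbA.
Qed.

Lemma degU1 A g x : g \notin A -> deg (g |: A) x = inc g x + deg A x.
Proof. by move=> gA; rewrite (degD1 x (setU11 g A)) setU1K. Qed.

Lemma degD1_notinc A g x : ~~ inc g x -> deg (A :\ g) x = deg A x.
Proof.
move=> gx; rewrite !deg_inE; apply: eq_card => e; rewrite !inE.
by case: (eqVneq e g) => // ->; rewrite (negbTE gx) !andbF.
Qed.

Lemma degUI S T x : deg (S :|: T) x + deg (S :&: T) x = deg S x + deg T x.
Proof.
rewrite !deg_inE -[#|S :&: _| + _]cardsUI setIUl; congr (_ + #|_|).
by rewrite setIACA setIid.
Qed.

Definition proper_coloring j (c : E -> 'I_j) A :=
  forall e f, e \in A -> f \in A -> e != f -> shr e f -> c e != c f.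

Lemma k_colorableP j A :
  reflect (exists c : E -> 'I_j, proper_coloring c A) (k_colorable u v j A).
Proof.
apply: (iffP existsP) => [[c /forall_inP cP] | [c cP]].
  exists c => e f eA fA nef ef; have /forall_inP/(_ f fA)/implyP := cP e eA.
  by apply; rewrite nef ef.
exists [ffun e => c e]; apply/forall_inP => e eA; apply/forall_inP => f fA.
by apply/implyP => /andP[nef ef]; rewrite !ffunE cP.
Qed.

Lemma colorable0 j : 0 < j -> k_colorable u v j set0.
Proof. by move=> j0; apply/k_colorableP; exists (fun=> Ordinal j0) => e; rewrite inE. Qed.

Lemma colorable_deg j A x : k_colorable u v j A -> deg A x <= j.
Proof.
case/k_colorableP=> c cP; rewrite deg_inE -(card_in_imset (f := c)).
  by apply: leq_trans (max_card _) _; rewrite card_ord.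
move=> e f; rewrite !inE => /andP[eA ex] /andP[fA fx] cef.
apply/eqP; apply: contraT => nef.
by have := cP e f eA fA nef (share_endI ex fx); rewrite cef eqxx.
Qed.

Lemma leq_card_nu j A : k_colorable u v j A -> #|A| <= nu u v j.
Proof. exact: (@leq_bigmax_cond _ (k_colorable u v j) (fun A => #|A|)). Qed.

Lemma nu_attained j : 0 < j -> exists2 A, k_colorable u v j A & nu u v j = #|A|.
Proof.
move=> j0; have nz : 0 < #|[pred A : {set E} | k_colorable u v j A]|.
  by apply/card_gt0P; exists set0; rewrite inE colorable0.
by have [A ? ?] := eq_bigmax_cond (fun A : {set E} => #|A|) nz; exists A.
Qed.

Lemma exists_fresh_color j (U : {set 'I_j}) : #|U| < j -> exists b, b \notin U.
Proof.
move=> ltUj; apply/existsP; apply: contraTT ltUj => /existsPn allU.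
rewrite -leqNgt -{1}[j]card_ord -cardsT subset_leq_card //.
by apply/subsetP => b _; have := allU b; rewrite negbK.
Qed.

Definition recolor j (c : E -> 'I_j) g b e := if e == g then b else c e.

Lemma proper_recolorU1 j (c : E -> 'I_j) A g b :
  g \notin A -> proper_coloring c A -> (forall f, f \in A -> shr g f -> c f != b) ->
  proper_coloring (recolor c g b) (g |: A).
Proof.
move=> gA cP bP e f; rewrite !inE /recolor.
case: (eqVneq e g) => [->|neg]; case: (eqVneq f g) => [->|nfg] //= eA fA nef ef.
- by rewrite eq_sym bP.
- by rewrite bP // share_endC.
- exact: cP.
Qed.

Section RegularComponent.
Variables (A : {set E}) (e0 : E).
Hypotheses (e0A : e0 \in A) (regA : forall x, (deg A x == 0) || (deg A x == 2)).
Let adj B := [rel a b | [&& a \in B, b \in B & shr a b]].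
Let K := [set f in A | connect (adj A) e0 f].

Lemma component_closed a b : a \in K -> b \in A -> shr a b -> b \in K.
Proof.
rewrite !inE => /andP[aA e0a] bA ab; rewrite bA.
by apply: connect_trans e0a (connect1 _); rewrite /= aA bA.
Qed.

Lemma component_path a p : a \in K -> path (adj A) a p -> path (adj K) a p.
Proof.
elim: p a => //= b p IH a aK /andP[/and3P[_ bA ab] abp].
by have bK := component_closed aK bA ab; rewrite aK bK ab IH.
Qed.

Lemma regular_component_cycle : exists2 C, is_cycle u v C & C \subset A.
Proof.
have e0K : e0 \in K by rewrite inE e0A connect0.
exists K; last by apply/subsetP => f; rewrite inE => /andP[].
split; first by apply/set0Pn; exists e0.
  move=> x; have [/exists_inP[f fK fx] | noK] := boolP [exists f in K, inc f x].
    suff -> : deg K x = deg A x by [].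
    apply: eq_card => g; rewrite !inE; have [gx | _] := boolP (inc g x); rewrite ?andbF //.
    rewrite !andbT; apply/idP/idP => [/andP[] // | gA].
    by have := component_closed fK gA (share_endI fx gx); rewrite inE.
  suff -> : deg K x = 0 by [].
  rewrite deg_inE; apply: eq_card0 => g; rewrite in_setI [_ \in edges_at x]inE.
  by apply/negbTE; apply: contra noK => /andP[gK gx]; apply/exists_inP; exists g.
have adjK_sym : symmetric (adj K).
  by move=> a b /=; rewrite share_endC; case: (a \in K); case: (b \in K).
have from_e0 f : f \in K -> connect (adj K) e0 f.
  move=> fK; move: (fK); rewrite inE => /andP[_ /connectP[p pP ->]].
  by apply/connectP; exists p; first exact: component_path.
move=> f g fK gK; apply: connect_trans (from_e0 g gK).
by rewrite (sym_connect_sym adjK_sym) from_e0.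
Qed.

End RegularComponent.

Hypothesis loopless : forall e, u e != v e.

Definition leaves A := [set x | deg A x == 1].

Definition forest A := forall C, is_cycle u v C -> ~~ (C \subset A).

Lemma forestS A B : A \subset B -> forest B -> forest A.
Proof. by move=> sAB fB C cycC; apply: contra (fB C cycC) => /subset_trans->. Qed.

Lemma pendant_edge A w : w \in leaves A ->
  exists g z, [/\ g \in A, inc g z, {in A, forall f, inc f w -> f = g}
                & forall x, inc g x -> x = w \/ x = z].
Proof.
rewrite inE deg_inE => /cards1P[g Ag].
have : g \in A :&: edges_at w by rewrite Ag set11.
rewrite !inE => /andP[gA gw]; have [z gz endg] := incident_other gw.
exists g, z; split=> // f fA fw; apply/set1P; by rewrite -Ag !inE fA.
Qed.

Lemma deg_pendant0 A B g w : B \subset A :\ g -> {in A, forall f, inc f w -> f = g} ->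
  deg B w = 0.
Proof.
move=> sBA uw; rewrite deg_inE; apply: eq_card0 => f; rewrite !inE.
apply/negbTE/andP => -[fB fw]; have := subsetP sBA f fB; rewrite !inE => /andP[nfg fA].
by rewrite (uw f fA fw) eqxx in nfg.
Qed.

Lemma card_leavesD1 A g p : g \in A -> inc g p -> deg A p != 2 ->
  #|leaves (A :\ g)| <= #|leaves A :\ p| + 1.
Proof.
move=> gA gp p2; have [z _ endg] := incident_other gp.
rewrite -(cards1 z); apply: leq_trans (leq_card_setU _ _); apply: subset_leq_card.
apply/subsetP => x; rewrite !inE => /eqP Lx.
have [gx | ngx] := boolP (inc g x).
  have [xp | ->] := endg x gx; last by rewrite eqxx orbT.
  by move: p2; rewrite -xp (degD1 x gA) Lx gx.
have -> : x != p by apply: contraNneq ngx => ->.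
by rewrite -(degD1_notinc A ngx) Lx.
Qed.

Lemma few_leaves_cycle A : A != set0 -> #|leaves A| <= 1 ->
  exists2 C, is_cycle u v C & C \subset A.
Proof.
have [n] := ubnP #|A|; elim: n => // n IH in A *; rewrite ltnS => leAn nzA lvA.
have cut p : deg A p != 2 -> 0 < deg A p -> #|leaves A :\ p| = 0 ->
    exists2 C, is_cycle u v C & C \subset A.
  move=> p2 p0 lvp; move: p0; rewrite deg_inE card_gt0 => /set0Pn[g].
  rewrite !inE => /andP[gA gp].
  have [|||C cycC sCA] := IH (A :\ g).
  - by move: leAn; rewrite (cardsD1 g) gA.
  - apply: contraTneq lvA => Ag0.
    have leaf_end x : inc g x -> x \in leaves A by rewrite inE (degD1 x gA) Ag0 deg_set0 => ->.
    rewrite -ltnNge; apply/card_gt1P; exists (u g), (v g).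
    by rewrite loopless leaf_end ?incident_u ?leaf_end ?incident_v.
  - by rewrite -lvp -add1n addnC card_leavesD1.
  by exists C => //; apply: subset_trans sCA (subsetDl _ _).
have [noL | /set0Pn[p lp]] := eqVneq (leaves A) set0; last first.
  move: (lp); rewrite inE => /eqP p1; apply: (cut p); rewrite ?p1 //.
  by move: lvA; rewrite (cardsD1 p) lp; case: #|_|.
have [/existsP[p p3] | /existsPn le2] := boolP [exists p, 2 < deg A p].
  by apply: (cut p); rewrite ?noL ?set0D ?cards0 //; lia.
have [e0 e0A] := set0Pn _ nzA; apply: (regular_component_cycle e0A) => x.
have := le2 x; have : x \notin leaves A by rewrite noL inE.
by rewrite inE; lia.
Qed.

Lemma forest_two_leaves A : forest A -> A != set0 -> 1 < #|leaves A|.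
Proof.
move=> fA nzA; rewrite ltnNge; apply/negP => lvA.
by have [C cycC] := few_leaves_cycle nzA lvA; apply/negP; apply: fA.
Qed.

Definition balanced S T := forall x, deg S x <= (deg T x).+1 /\ deg T x <= (deg S x).+1.

Lemma balanced_sym S T : balanced S T -> balanced T S.
Proof. by move=> balST x; have [] := balST x. Qed.

Lemma balanced_pendantU1 S T g w z :
  deg S w = 0 -> deg T w = 0 -> deg S z <= deg T z -> g \notin S ->
  (forall x, inc g x -> x = w \/ x = z) -> balanced S T -> balanced (g |: S) T.
Proof.
move=> Sw Tw STz gS endg balST x; rewrite degU1 //.
have [gx | ngx] := boolP (inc g x); last by rewrite add0n.
by have [->|->] := endg x gx; rewrite ?Sw ?Tw //; have := balST z; lia.
Qed.

(* Peeling off pendant edges one at a time, each goes to the side of smaller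
   degree at its inner end; its outer end had degree 0 on both sides. *)
Lemma forest_balanced_split A :
  forest A -> exists2 A1 : {set E}, A1 \subset A & balanced A1 (A :\: A1).
Proof.
have [n] := ubnP #|A|; elim: n => // n IH in A *; rewrite ltnS => leAn fA.
have [-> | nzA] := eqVneq A set0; first by exists set0 => // x; rewrite setD0 deg_set0.
have /card_gt0P[w lw] := ltnW (forest_two_leaves fA nzA).
have [g [z [gA gz uw endg]]] := pendant_edge lw.
have [|A1 sA1 balA1] := IH (A :\ g) _ (forestS (subsetDl _ _) fA).
  by move: leAn; rewrite (cardsD1 g) gA.
set A2 := (A :\ g) :\: A1 in balA1 *.
have sA2 : A2 \subset A :\ g := subsetDl _ _.
have gA1 : g \notin A1 by apply/negP => /(subsetP sA1); rewrite !inE eqxx.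
have gA2 : g \notin A2 by rewrite !inE eqxx andbF.
have [A1z | A2z] := leqP (deg A1 z) (deg A2 z).
  exists (g |: A1); first by rewrite subUset sub1set gA (subset_trans sA1) ?subsetDl.
  have -> : A :\: (g |: A1) = A2.
    by apply/setP => e; rewrite !inE; case: (e == g); case: (e \in A1).
  exact: balanced_pendantU1 (deg_pendant0 sA1 uw) (deg_pendant0 sA2 uw) A1z gA1 endg balA1.
exists A1; first exact: subset_trans sA1 (subsetDl _ _).
have -> : A :\: A1 = g |: A2.
  by apply/setP => e; rewrite !inE; case: (eqVneq e g) => // ->; rewrite gA (negbTE gA1).
apply/balanced_sym/(balanced_pendantU1 (deg_pendant0 sA2 uw) (deg_pendant0 sA1 uw)
  (ltnW A2z) gA2 endg).
exact: balanced_sym.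
Qed.

Lemma forest_rearrange F1 F2 : forest (F1 :|: F2) ->
  exists S T, [/\ S :|: T = F1 :|: F2, #|S| + #|T| = #|F1| + #|F2|,
                  forall x, deg S x + deg T x = deg F1 x + deg F2 x & balanced S T].
Proof.
move=> fF; set B := F1 :&: F2; set A := (F1 :|: F2) :\: B.
have [A1 sA1 balA1] := forest_balanced_split (forestS (subsetDl _ B) fF).
have sA2 : A :\: A1 \subset A := subsetDl _ _.
have UST : (B :|: A1) :|: (B :|: (A :\: A1)) = F1 :|: F2.
  apply/setP => e; have := subsetP sA1 e; rewrite !inE.
  by move/implyP; case: (e \in A1); case: (e \in F1); case: (e \in F2).
have IST : (B :|: A1) :&: (B :|: (A :\: A1)) = B.
  apply/setP => e; have := subsetP sA1 e; rewrite !inE.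
  by move/implyP; case: (e \in A1); case: (e \in F1); case: (e \in F2).
have degBU (X : {set E}) x : X \subset A -> deg (B :|: X) x = deg B x + deg X x.
  move=> sXA; rewrite -degUI; suff -> : B :&: X = set0 by rewrite deg_set0 addn0.
  apply/setP => e; have := subsetP sXA e; rewrite !inE.
  by move/implyP; case: (e \in X); case: (e \in F1); case: (e \in F2).
exists (B :|: A1), (B :|: (A :\: A1)); split=> //.
- by rewrite -cardsUI UST IST cardsUI.
- by move=> x; rewrite -degUI UST IST degUI.
- by move=> x; rewrite !degBU //; have := balA1 x; rewrite -/A; lia.
Qed.

Lemma proper_recolor_pendant j (c : E -> 'I_j) A g w z (b : 'I_j) :
  g \in A -> {in A, forall f, inc f w -> f = g} -> (forall x, inc g x -> x = w \/ x = z) ->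
  proper_coloring c (A :\ g) -> b \notin c @: ((A :\ g) :&: edges_at z) ->
  proper_coloring (recolor c g b) A.
Proof.
move=> gA uw endg cP bz; rewrite -(setD1K gA); apply: proper_recolorU1; rewrite ?setD11 //.
move=> f; rewrite !inE => /andP[nfg fA] /share_endP[x gx fx].
have [xw | xz] := endg x gx; subst x; first by rewrite (uw f fA fx) eqxx in nfg.
by apply: contra bz => /eqP <-; apply/imsetP; exists f; rewrite // !inE nfg fA.
Qed.

Lemma forest_colorable j A : 0 < j -> forest A -> (forall x, deg A x <= j) ->
  k_colorable u v j A.
Proof.
move=> j0; have [n] := ubnP #|A|; elim: n => // n IH in A *; rewrite ltnS => leAn fA degA.
have [-> | nzA] := eqVneq A set0; first exact: colorable0.
have /card_gt0P[w lw] := ltnW (forest_two_leaves fA nzA).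
have [g [z [gA gz uw endg]]] := pendant_edge lw.
have /k_colorableP[c cP] : k_colorable u v j (A :\ g).
  apply: IH.
  - by move: leAn; rewrite (cardsD1 g) gA.
  - exact: forestS (subsetDl _ _) fA.
  - by move=> x; apply: leq_trans (degA x); rewrite subset_leq_deg ?subsetDl.
have [b bz] : exists b, b \notin c @: ((A :\ g) :&: edges_at z).
  apply: exists_fresh_color; apply: leq_ltn_trans (leq_imset_card _ _) _.
  by rewrite -deg_inE; have := degA z; rewrite (degD1 z gA) gz.
by apply/k_colorableP; exists (recolor c g b); apply: proper_recolor_pendant endg cP bz.
Qed.

Definition avoids j (c : E -> 'I_j) A (a : 'I_j) x :=
  forall e, e \in A -> inc e x -> c e != a.

Lemma forest_coloring_avoid k A x y : 2 < k -> forest A -> (forall z, deg A z <= k) ->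
  deg A x < k -> deg A y < k ->
  exists (c : E -> 'I_k) (a : 'I_k),
    [/\ proper_coloring c A, avoids c A a x & avoids c A a y].
Proof.
move=> k2; have [n] := ubnP #|A|; elim: n => // n IH in A *.
rewrite ltnS => leAn fA degA dx dy.
have [/andP[x1 y1] | ] := boolP ((deg A x <= 1) && (deg A y <= 1)).
  have /k_colorableP[c cP] := forest_colorable (ltnW (ltnW k2)) fA degA.
  have [a aU] : exists a, a \notin c @: (A :&: edges_at x :|: A :&: edges_at y).
    apply: exists_fresh_color; apply: leq_ltn_trans (leq_imset_card _ _) _.
    by apply: leq_ltn_trans (leq_card_setU _ _) _; rewrite -!deg_inE; lia.
  exists c, a; split=> // e eA ex; apply: contra aU => /eqP <-; apply/imsetP; exists e => //;
    by rewrite !inE eA ex ?orbT.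
rewrite negb_and -!ltnNge => xy2.
have nzA : A != set0 by apply: contraTneq xy2 => ->; rewrite !deg_set0.
(* Otherwise x and y would be the two leaves of A, of degree 1. *)
have /subsetPn[w lw] : ~~ (leaves A \subset [set x; y]).
  apply/negP => sub; have /eqP eqL : leaves A == [set x; y].
    rewrite eqEcard sub cards2 (leq_trans _ (forest_two_leaves fA nzA)) //.
    by case: (x != y).
  have := set21 x y; have := set22 x y; rewrite -eqL !inE => /eqP y1 /eqP x1.
  by move: xy2; rewrite x1 y1.
rewrite !inE negb_or => /andP[wx wy].
have [g [z [gA gz uw endg]]] := pendant_edge lw.
have sub_deg t : deg (A :\ g) t <= deg A t by rewrite subset_leq_deg ?subsetDl.
have [|||||c [a [cP ax ay]]] := IH (A :\ g).
- by move: leAn; rewrite (cardsD1 g) gA.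
- exact: forestS (subsetDl _ _) fA.
- by move=> t; apply: leq_trans (sub_deg t) (degA t).
- exact: leq_ltn_trans (sub_deg x) dx.
- exact: leq_ltn_trans (sub_deg y) dy.
have dz := degD1 z gA; rewrite gz add1n in dz.
set U := c @: ((A :\ g) :&: edges_at z).
have leU : #|U| <= deg (A :\ g) z by rewrite deg_inE leq_imset_card.
have [b bU ba] : exists2 b, b \notin U & (z == x) || (z == y) -> b != a.
  have [zxy | _] := boolP ((z == x) || (z == y)); last first.
    have [|b bU] := exists_fresh_color (U := U); last by exists b.
    by apply: leq_ltn_trans leU _; have := degA z; lia.
  have dzk : deg A z < k by case/orP: zxy => /eqP->.
  have [|b] := exists_fresh_color (U := a |: U).
    apply: leq_ltn_trans (leq_card_setU _ _) _; rewrite cards1.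
    by apply: leq_ltn_trans (leq_add (leqnn 1) leU) _; lia.
  by rewrite !inE negb_or => /andP[ba bU]; exists b.
have avoid t : (t == x) || (t == y) -> avoids c (A :\ g) a t ->
    avoids (recolor c g b) A a t.
  move=> txy tav e eA et; rewrite /recolor; case: (eqVneq e g) => [eg | neg].
    subst e; have [tw | tz] := endg t et; last by apply: ba; rewrite -tz.
    by move: txy; rewrite tw (negbTE wx) (negbTE wy).
  by apply: tav; rewrite // !inE neg.
exists (recolor c g b), a; split; first exact: proper_recolor_pendant endg cP bU.
  by apply: avoid ax; rewrite eqxx.
by apply: avoid ay; rewrite eqxx orbT.
Qed.

Lemma forest_colorableU1 k A e0 : 2 < k -> forest A -> e0 \notin A ->
  (forall x, deg A x <= k) -> deg A (u e0) < k -> deg A (v e0) < k ->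
  k_colorable u v k (e0 |: A).
Proof.
move=> k2 fA e0A degA du dv.
have [c [a [cP au av]]] := forest_coloring_avoid k2 fA degA du dv.
apply/k_colorableP; exists (recolor c e0 a); apply: proper_recolorU1 => // f fA'.
by case/share_endP=> x /incidentP[]-> fx; [apply: au | apply: av].
Qed.

Lemma balanced_deg_le k S T x : balanced S T -> deg S x + deg T x <= k + k ->
  deg S x <= k /\ deg T x <= k.
Proof. by move=> /(_ x)[le_ST le_TS] le2k; split; lia. Qed.

Lemma card_add_le_nu k F1 F2 : 0 < k -> forest (F1 :|: F2) ->
  (forall x, deg F1 x + deg F2 x <= k + k) -> #|F1| + #|F2| <= nu u v k + nu u v k.
Proof.
move=> k0 fF degF; have [S [T [UST <- degST balST]]] := forest_rearrange fF.
have fS : forest S by apply: forestS fF; rewrite -UST subsetUl.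
have fT : forest T by apply: forestS fF; rewrite -UST subsetUr.
have le_k x : deg S x <= k /\ deg T x <= k by apply: balanced_deg_le; rewrite ?degST.
by apply: leq_add; apply: leq_card_nu; apply: forest_colorable => // x; have [] := le_k x.
Qed.

Lemma card_add_le_nu_drop k F1 F2 e0 : 0 < k -> e0 \notin F1 :&: F2 ->
  forest ((F1 :|: F2) :\ e0) -> (forall x, deg F1 x + deg F2 x <= k + k) ->
  #|F1| + #|F2| <= (nu u v k + nu u v k).+1.
Proof.
move=> k0 e0F fF degF.
have : #|F1 :\ e0| + #|F2 :\ e0| <= nu u v k + nu u v k.
  apply: card_add_le_nu; rewrite -?setDUl // => x.
  by apply: leq_trans (degF x); apply: leq_add; rewrite subset_leq_deg ?subsetDl.
rewrite (cardsD1 e0 F1) (cardsD1 e0 F2) in e0F *; rewrite inE in e0F.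
by case: (e0 \in F1) (e0 \in F2) e0F => [] [] //= _; lia.
Qed.

Lemma card_add_le_nu_shared k F1 F2 e0 : 2 < k -> e0 \in F1 :&: F2 ->
  forest ((F1 :|: F2) :\ e0) -> (forall x, deg F1 x + deg F2 x <= k + k) ->
  #|F1| + #|F2| <= nu u v k + nu u v k.
Proof.
move=> k2; rewrite inE => /andP[e0F1 e0F2]; rewrite setDUl => fF degF.
have [S [T [UST cardST degST balST]]] := forest_rearrange fF.
have fS : forest S by apply: forestS fF; rewrite -UST subsetUl.
have fT : forest T by apply: forestS fF; rewrite -UST subsetUr.
have e0ST : e0 \notin S :|: T by rewrite UST !inE eqxx.
have [e0S e0T] : e0 \notin S /\ e0 \notin T by move: e0ST; rewrite inE negb_or => /andP.
have degD x : deg S x + deg T x + inc e0 x + inc e0 x <= k + k.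
  by have := degF x; have := degST x; rewrite (degD1 x e0F1) (degD1 x e0F2); lia.
have le_k x : deg S x <= k /\ deg T x <= k.
  by apply: (balanced_deg_le balST); have := degD x; lia.
have lt_k x : inc e0 x -> deg S x < k /\ deg T x < k.
  move=> e0x; have [] := balanced_deg_le (k := k.-1) (x := x) balST.
    by have := degD x; rewrite e0x; lia.
  by move=> *; split; lia.
have colS := forest_colorableU1 k2 fS e0S (fun x => (le_k x).1)
  (lt_k _ (incident_u e0)).1 (lt_k _ (incident_v e0)).1.
have colT := forest_colorableU1 k2 fT e0T (fun x => (le_k x).2)
  (lt_k _ (incident_u e0)).2 (lt_k _ (incident_v e0)).2.
have := leq_card_nu colS; have := leq_card_nu colT; rewrite !cardsU1 e0S e0T.
by rewrite (cardsD1 e0 F1) (cardsD1 e0 F2) e0F1 e0F2 /=; lia.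
Qed.

Lemma cycle_notin_matching C F : is_cycle u v C -> (forall x, deg F x <= 1) ->
  exists2 e, e \in C & e \notin F.
Proof.
case=> /set0Pn[e eC] regC _ degF; have : ~~ (C \subset F).
  apply/negP => sCF; have := subset_leq_deg (u e) sCF; have := degF (u e).
  have : 0 < deg C (u e).
    by rewrite deg_inE card_gt0; apply/set0Pn; exists e; rewrite !inE eC incident_u.
  by case/orP: (regC (u e)) => /eqP->; lia.
by case/subsetPn => f fC fF; exists f.
Qed.

End UnicyclicColoring.

Theorem theorem13 (V E : finType) (u v : E -> V)
  (loopless : forall e : E, u e != v e)
  (unicyclic : at_most_one_cycle u v) (k : nat) (hk : 2 <= k) :
  (nu u v k.-1 + nu u v k.+1) %/ 2 <= nu u v k.
Proof.
have [F1 colF1 ->] : exists2 F1, k_colorable u v k.-1 F1 & nu u v k.-1 = #|F1|.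
  by apply: nu_attained; rewrite -subn1 subn_gt0.
have [F2 colF2 ->] := nu_attained u v (ltn0Sn k).
have degF x : deg_in u v F1 x + deg_in u v F2 x <= k + k.
  by have := colorable_deg x colF1; have := colorable_deg x colF2; lia.
suff : #|F1| + #|F2| <= (nu u v k + nu u v k).+1 by lia.
have [[C cycC] | noC] := classic (exists C, is_cycle u v C); last first.
  apply/leqW/(card_add_le_nu loopless (ltnW hk)) => // C cycC.
  by case: noC; exists C.
have [e0 e0C k2_or_e0F] : exists2 e0, e0 \in C & (2 < k) || (e0 \notin F1 :&: F2).
  have [k2 | k_gt2] := leqP k 2; last by have [/set0Pn[e0 e0C] _ _] := cycC; exists e0.
  have [|e0 e0C e0F1] := cycle_notin_matching cycC (F := F1).
    by move=> x; apply: leq_trans (colorable_deg x colF1) _; lia.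
  by exists e0; rewrite // inE (negbTE e0F1) orbT.
have fF : forest u v ((F1 :|: F2) :\ e0).
  move=> D cycD; rewrite (unicyclic _ _ cycD cycC); apply/subsetPn.
  by exists e0; rewrite // !inE eqxx.
have [e0F | e0F] := boolP (e0 \in F1 :&: F2).
  rewrite e0F orbF in k2_or_e0F.
  exact/leqW/(card_add_le_nu_shared loopless k2_or_e0F e0F).
exact: (card_add_le_nu_drop loopless (ltnW hk) e0F fF degF).
Qed.
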